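(* Let $X\in\mathbb{R}^{n\times d}$, $y\in\mathbb{R}^n$, and let $g:\mathbb{R}^d\to(-\infty,\infty]$ be a proper lower semicontinuous convex function with $g(k\beta)=kg(\beta)$ for all $k\ge0$, $\beta\in\mathbb{R}^d$, such that there exists $\beta\in\mathrm{relint}(\mathrm{dom}(g))$ and $P(\beta):=\frac12\|y-X\beta\|_2^2+g(\beta)$ attains its infimum. Let $f(z)=\frac12\|y-z\|_2^2$, so $-f^\star(-\theta)=-\frac12\|\theta\|_2^2+y^\top\theta$, let $D(\theta)=-f^\star(-\theta)-g^\star(X^\top\theta)$, and let $\hat\theta$ be a maximizer of $D$. For $\tilde\beta\in\mathbb{R}^d$ define \[ u^{\mathrm{GM}}(\theta;\tilde\beta)=\begin{cases}-f^\star(-\theta) & \text{if } -f^\star(-\theta)\le P(\tilde\beta),\\ -\infty & \text{if } -f^\star(-\theta)>P(\tilde\beta).\end{cases} \] Then for all $\tilde\beta\in\mathbb{R}^d$, $\tilde\theta\in\mathrm{dom}(D)$ and $\theta\in\mathbb{R}^n$ we have $D(\theta)\le u^{\mathrm{GM}}(\theta;\tilde\beta)$, and hence \[ \hat\theta\in\{\theta\mid l(\theta;\tilde\theta)\le u^{\mathrm{GM}}(\theta;\tilde\beta)\}=\{\theta\mid -f^\star(-\theta)\le P(\tilde\beta)\ \land\ (\tilde\theta-\theta)^\top(y-\theta)\le0\}, \] where $l(\theta;\tilde\theta)=\frac12\|\theta-\tilde\theta\|_2^2+D(\tilde\theta)$.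
   Context: $h^\star(v)=\sup_z v^\top z-h(z)$ is the Fenchel conjugate; $\mathrm{dom}(h)=\{z:|h(z)|<\infty\}$; $\mathrm{relint}$ is relative interior. *)

From HB Require Import structures.
From mathcomp Require Import all_boot all_order all_algebra.
From mathcomp Require Import all_classical all_reals all_analysis.
Set Implicit Arguments. Unset Strict Implicit. Unset Printing Implicit Defensive.
Import Order.TTheory GRing.Theory Num.Theory.
Import numFieldNormedType.Exports.
Local Open Scope classical_set_scope.
Local Open Scope ring_scope.

Section Defs.
Context {R : realType}.

Definition dotv {n : nat} (u v : 'cV[R]_n) : R := \sum_(i < n) u i 0 * v i 0.
Definition sqnorm2 {n : nat} (u : 'cV[R]_n) : R := dotv u u.

Definition fenchel {n : nat} (h : 'cV[R]_n -> \bar R) (v : 'cV[R]_n) : \bar R :=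
  ereal_sup [set ((dotv v z)%:E - h z)%E | z in [set: 'cV[R]_n]].

Definition edom {n : nat} (h : 'cV[R]_n -> \bar R) : set 'cV[R]_n :=
  [set z | h z \is a fin_num].

Definition proper_fun {n : nat} (h : 'cV[R]_n -> \bar R) : Prop :=
  (forall z, h z != -oo%E) /\ (exists z, h z \is a fin_num).

Definition convex_efun {n : nat} (h : 'cV[R]_n -> \bar R) : Prop :=
  forall (x y : 'cV[R]_n) (t : R), 0 <= t <= 1 ->
    (h (t *: x + (1 - t) *: y)%R <= t%:E * h x + (1 - t)%:E * h y)%E.

Definition affine_hull {n : nat} (C : set 'cV[R]_n) : set 'cV[R]_n :=
  [set x | exists (m : nat) (w : 'I_m -> R) (p : 'I_m -> 'cV[R]_n),
      (forall i, C (p i)) /\ \sum_(i < m) w i = 1 /\ x = \sum_(i < m) w i *: p i].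

Definition relint {n : nat} (C : set 'cV[R]_n) : set 'cV[R]_n :=
  [set x | C x /\ exists2 e : R, 0 < e &
      forall z, ball x e z -> affine_hull C z -> C z].

End Defs.

From HB Require Import structures.
From mathcomp Require Import all_boot all_order all_algebra.
From mathcomp Require Import all_classical all_reals all_analysis.
From mathcomp Require Import ring lra.
Import Order.TTheory GRing.Theory Num.Theory.
Import numFieldNormedType.Exports.
Local Open Scope classical_set_scope.
Local Open Scope ring_scope.

(* Positive homogeneity makes g^* take only the values 0 and +oo: it is the
   indicator of the convex set {v | v^T z <= g z for all z}.  Hence
   D(θ) = y^T θ - ‖θ‖²/2 on the convex dual-feasible set {θ | g^*(X^T θ) = 0}
   and D(θ) = -oo elsewhere, and Fenchel-Young for ‖.‖²/2 bounds D by P, which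
   gives D <= u^GM.  On the feasible set D is 1-strongly concave, so at its
   maximizer D(θ̂) >= D(θ̃) + ‖θ̂ - θ̃‖²/2 = l(θ̂; θ̃).  Finally, expanding the
   quadratic around θ turns l(θ; θ̃) <= -f^*(-θ) into (θ̃ - θ)^T (y - θ) <= 0. *)

Section InnerProduct.
Context {R : realType} {n : nat}.
Implicit Types u v w : 'cV[R]_n.

Lemma dotvC u v : dotv u v = dotv v u.
Proof. by apply: eq_bigr => i _; rewrite mulrC. Qed.

Lemma dotvDl u v w : dotv (u + v) w = dotv u w + dotv v w.
Proof. by rewrite /dotv -big_split; apply: eq_bigr => i _; rewrite mxE mulrDl. Qed.

Lemma dotvZl a u w : dotv (a *: u) w = a * dotv u w.
Proof. by rewrite /dotv mulr_sumr; apply: eq_bigr => i _; rewrite mxE mulrA. Qed.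

Lemma dotvNl u w : dotv (- u) w = - dotv u w.
Proof. by rewrite -scaleN1r dotvZl mulN1r. Qed.

Lemma dotvBl u v w : dotv (u - v) w = dotv u w - dotv v w.
Proof. by rewrite dotvDl dotvNl. Qed.

Lemma dotvDr u v w : dotv w (u + v) = dotv w u + dotv w v.
Proof. by rewrite !(dotvC w) dotvDl. Qed.

Lemma dotvZr a u w : dotv w (a *: u) = a * dotv w u.
Proof. by rewrite !(dotvC w) dotvZl. Qed.

Lemma dotvNr u w : dotv w (- u) = - dotv w u.
Proof. by rewrite !(dotvC w) dotvNl. Qed.

Lemma dotvBr u v w : dotv w (u - v) = dotv w u - dotv w v.
Proof. by rewrite dotvDr dotvNr. Qed.

Lemma dotv0r u : dotv u 0 = 0.
Proof. by rewrite -(scale0r 0) dotvZr mul0r. Qed.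

Lemma sqnorm2_ge0 u : 0 <= sqnorm2 u.
Proof. by apply: sumr_ge0 => i _; rewrite -expr2 sqr_ge0. Qed.

Lemma sqnorm2D u w : sqnorm2 (u + w) = sqnorm2 u + 2 * dotv u w + sqnorm2 w.
Proof. by rewrite /sqnorm2 dotvDl !dotvDr (dotvC w u); ring. Qed.

Lemma sqnorm2N u : sqnorm2 (- u) = sqnorm2 u.
Proof. by rewrite /sqnorm2 dotvNl dotvNr opprK. Qed.

Lemma sqnorm2Z a u : sqnorm2 (a *: u) = a ^+ 2 * sqnorm2 u.
Proof. by rewrite /sqnorm2 dotvZl dotvZr mulrA expr2. Qed.

End InnerProduct.

Lemma dotv_mulmx {R : realType} {n d : nat} (X : 'M[R]_(n, d)) th b :
  dotv th (X *m b) = dotv (X^T *m th) b.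
Proof.
rewrite /dotv.
under eq_bigr do rewrite mxE big_distrr.
under [RHS]eq_bigr do rewrite mxE big_distrl.
rewrite exchange_big; apply: eq_bigr => j _; apply: eq_bigr => i _.
by rewrite /= mxE; ring.
Qed.

Lemma le0_of_quadratic_bound {R : realType} (a c : R) : 0 <= c ->
  (forall s, 0 < s <= 1 -> s * a <= 2^-1 * (s ^+ 2 * c)) -> a <= 0.
Proof.
move=> c_ge0 bound; rewrite leNgt; apply/negP => a_gt0.
have ac_gt0 : 0 < a + c by lra.
(* the bound fails at s = a / (a + c), where s (a + c) = a *)
set s := a / (a + c).
have s_gt0 : 0 < s by rewrite divr_gt0.
have s_le1 : s <= 1 by rewrite ler_pdivrMr // mul1r; lra.
have := bound s; rewrite s_gt0 s_le1 => /(_ isT).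
have sE : s * (a + c) = a by rewrite /s divfK // gt_eqF.
have sc : s * c = a - s * a by rewrite -{1}sE; ring.
have sa_gt0 : 0 < s * a by rewrite mulr_gt0.
rewrite expr2 -mulrA sc; nra.
Qed.

Section DualQuadratic.
Context {R : realType} {n : nat}.
Implicit Types y th u w : 'cV[R]_n.

Definition dual_quad y th : R := dotv y th - 2^-1 * sqnorm2 th.

Lemma dual_quadD y u w :
  dual_quad y (u + w) = dual_quad y u + dotv (y - u) w - 2^-1 * sqnorm2 w.
Proof. by rewrite /dual_quad sqnorm2D dotvDr dotvBl; lra. Qed.

Lemma dual_quad_le_half_sqdist y th u :
  dual_quad y th <= 2^-1 * sqnorm2 (y - u) + dotv th u.
Proof.
have := sqnorm2_ge0 (y - u - th).
by rewrite sqnorm2D sqnorm2N dotvNr dotvBl /dual_quad (dotvC th u); lra.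
Qed.

Lemma fenchel_half_sqdistN y th :
  (- fenchel (fun z => (2^-1 * sqnorm2 (y - z))%:E) (- th))%E = (dual_quad y th)%:E.
Proof.
suff -> : fenchel (fun z => (2^-1 * sqnorm2 (y - z))%:E) (- th) =
          (- dual_quad y th)%:E by rewrite -EFinN opprK.
apply/eqP; rewrite eq_le; apply/andP; split.
- apply: ge_ereal_sup => _ [z _ <-]; rewrite -EFinB lee_fin dotvNl.
  by have := dual_quad_le_half_sqdist y th z; lra.
- apply: ereal_sup_ubound; exists (y - th) => //.
  rewrite subKr -EFinB /dual_quad dotvNl dotvBr (dotvC th y) /sqnorm2.
  by congr EFin; lra.
Qed.

Lemma half_sqdist_add_dual_quad_le y th tht :
  (2^-1 * sqnorm2 (th - tht) + dual_quad y tht <= dual_quad y th) =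
  (dotv (tht - th) (y - th) <= 0).
Proof.
have := dual_quadD y th (tht - th); rewrite addrC subrK (dotvC (y - th)).
rewrite -sqnorm2N opprB => ->.
by apply/idP/idP; lra.
Qed.

Lemma dual_quad_max_segment y th0 th1 :
  (forall s, 0 < s <= 1 ->
     dual_quad y (th0 + s *: (th1 - th0)) <= dual_quad y th0) ->
  2^-1 * sqnorm2 (th0 - th1) + dual_quad y th1 <= dual_quad y th0.
Proof.
move=> th0_max; rewrite half_sqdist_add_dual_quad_le dotvC.
apply: (le0_of_quadratic_bound _ _ (sqnorm2_ge0 (th1 - th0))) => s s01.
by have := th0_max s s01; rewrite dual_quadD dotvZr sqnorm2Z; lra.
Qed.

End DualQuadratic.

Section PositivelyHomogeneous.
Context {R : realType} {d : nat} {g : 'cV[R]_d -> \bar R}.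
Hypothesis g_neqNy : forall z, g z != -oo%E.
Hypothesis g_hom : forall (k : R) (b : 'cV[R]_d), 0 <= k -> g (k *: b) = (k%:E * g b)%E.

Lemma homog_fun0 : g 0 = 0%E.
Proof. by have := @g_hom 0 0 (lexx 0); rewrite scale0r mul0e. Qed.

Lemma fenchel_homog_ge0 v : (0 <= fenchel g v)%E.
Proof.
apply: le_trans (ereal_sup_ubound _); last by exists 0.
by rewrite homog_fun0 dotv0r sube0.
Qed.

Lemma fenchel_le0P v :
  (fenchel g v <= 0)%E <-> (forall z, ((dotv v z)%:E <= g z)%E).
Proof.
have termE z : ((dotv v z)%:E - g z <= 0)%E = ((dotv v z)%:E <= g z)%E.
  move: (g_neqNy z); case: (g z) => [r| |] //= _; last by rewrite leey leNye.
  by rewrite -EFinB !lee_fin subr_le0.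
split=> [v_le z | v_le]; last by apply: ge_ereal_sup => _ [z _ <-]; rewrite termE.
by rewrite -termE; apply: le_trans v_le; apply: ereal_sup_ubound; exists z.
Qed.

Lemma fenchel_homog_cases v : fenchel g v = 0%E \/ fenchel g v = +oo%E.
Proof.
have := fenchel_homog_ge0 v.
case gvE: (fenchel g v) => [s| |] //= s_ge0; [left | by right].
suff s_le0 : (s%:E <= 0)%E by apply/eqP; rewrite eq_le s_le0 s_ge0.
have {}s_ge0 : 0 <= s by rewrite -lee_fin.
rewrite -gvE; apply/fenchel_le0P => z; move: (g_neqNy z).
case gzE: (g z) => [r| |] // _; last by rewrite leey.
rewrite lee_fin leNgt; apply/negP => r_lt.
(* scaling z by k multiplies the gap v^T z - g z > 0, which exceeds s for large k *)
set k := (s + 1) / (dotv v z - r).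
have gap_gt0 : 0 < dotv v z - r by rewrite subr_gt0.
have k_ge0 : 0 <= k by rewrite /k divr_ge0 //; [lra | exact: ltW].
have kE : k * (dotv v z - r) = s + 1 by rewrite /k divfK // gt_eqF.
have : ((dotv v (k *: z))%:E - g (k *: z) <= fenchel g v)%E.
  by apply: ereal_sup_ubound; exists (k *: z).
by rewrite gvE g_hom // gzE dotvZr -EFinM -EFinB lee_fin -mulrBr kE; lra.
Qed.

Lemma fenchel_homog_eq0_segment v w t : fenchel g v = 0%E -> fenchel g w = 0%E ->
  0 <= t <= 1 -> fenchel g (v + t *: (w - v)) = 0%E.
Proof.
move=> gv0 gw0 /andP[t_ge0 t_le1].
apply/eqP; rewrite eq_le fenchel_homog_ge0 andbT; apply/fenchel_le0P => z.
have /fenchel_le0P v_le : (fenchel g v <= 0)%E by rewrite gv0.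
have /fenchel_le0P w_le : (fenchel g w <= 0)%E by rewrite gw0.
move: (v_le z) (w_le z) (g_neqNy z).
case: (g z) => [r| |] //= vz_le wz_le _; last by rewrite leey.
move: vz_le wz_le; rewrite !lee_fin dotvDl dotvZl dotvBl; nra.
Qed.

End PositivelyHomogeneous.

Section HomogeneousRegularizedLeastSquares.
Context {R : realType} {n d : nat} (X : 'M[R]_(n, d)) (y : 'cV[R]_n).
Context (g : 'cV[R]_d -> \bar R).
Hypothesis g_neqNy : forall z, g z != -oo%E.
Hypothesis g_hom : forall (k : R) (b : 'cV[R]_d), 0 <= k -> g (k *: b) = (k%:E * g b)%E.

Definition primal b := ((2^-1 * sqnorm2 (y - X *m b))%:E + g b)%E.
Definition dual th := ((dual_quad y th)%:E - fenchel g (X^T *m th))%E.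

Lemma dual_feasibleE th :
  fenchel g (X^T *m th) = 0%E -> dual th = (dual_quad y th)%:E.
Proof. by rewrite /dual => ->; rewrite sube0. Qed.

Lemma fin_dual_feasible th : dual th \is a fin_num -> fenchel g (X^T *m th) = 0%E.
Proof. by rewrite /dual; case: (fenchel_homog_cases g_neqNy g_hom (X^T *m th)) => ->. Qed.

Lemma weak_duality th b :
  fenchel g (X^T *m th) = 0%E -> ((dual_quad y th)%:E <= primal b)%E.
Proof.
move=> feasible.
have /(fenchel_le0P g_neqNy)/(_ b) : (fenchel g (X^T *m th) <= 0)%E by rewrite feasible.
rewrite -dotv_mulmx /primal; move: (g_neqNy b).
case: (g b) => [r| |] //= _; last by move=> _; rewrite addey // leey.
rewrite -EFinD !lee_fin => th_le.
by have := dual_quad_le_half_sqdist y th (X *m b); lra.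
Qed.

Lemma dual_le_uGM th b : (dual th <=
  if ((dual_quad y th)%:E <= primal b)%E then (dual_quad y th)%:E else -oo)%E.
Proof.
case: (fenchel_homog_cases g_neqNy g_hom (X^T *m th)) => feasible; last first.
  by rewrite /dual feasible /= leNye.
by rewrite dual_feasibleE // weak_duality.
Qed.

Lemma half_sqdist_add_dual_le_max th_max th : (forall th', (dual th' <= dual th_max)%E) ->
  dual th \is a fin_num ->
  ((2^-1 * sqnorm2 (th_max - th))%:E + dual th <= dual th_max)%E.
Proof.
move=> th_max_max /fin_dual_feasible th_feas.
have max_feas : fenchel g (X^T *m th_max) = 0%E.
  case: (fenchel_homog_cases g_neqNy g_hom (X^T *m th_max)) => // infeasible.
  by have := th_max_max th; rewrite dual_feasibleE // /dual infeasible /= leeNy_eq.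
rewrite !dual_feasibleE // -EFinD lee_fin.
apply: dual_quad_max_segment => s /andP[s_gt0 s_le1].
rewrite -lee_fin -!dual_feasibleE //.
by rewrite mulmxDr -scalemxAr mulmxBr fenchel_homog_eq0_segment // ltW.
Qed.

End HomogeneousRegularizedLeastSquares.

Theorem theorem9 (R : realType) (n d : nat) (X : 'M[R]_(n, d)) (y : 'cV[R]_n)
  (g : 'cV[R]_d -> \bar R)
  (g_proper : proper_fun g)
  (g_lsc : lower_semicontinuous g)
  (g_convex : convex_efun g)
  (g_hom : forall (k : R) (b : 'cV[R]_d), 0 <= k -> g (k *: b) = (k%:E * g b)%E)
  (g_relint : exists b, relint (edom g) b)
  (P_attains : exists b0, forall b : 'cV[R]_d,
      ((2^-1 * sqnorm2 (y - X *m b0))%:E + g b0 <=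
       (2^-1 * sqnorm2 (y - X *m b))%:E + g b)%E)
  (thetahat : 'cV[R]_n) :
  let P := fun b : 'cV[R]_d => ((2^-1 * sqnorm2 (y - X *m b))%:E + g b)%E in
  let f := fun z : 'cV[R]_n => (2^-1 * sqnorm2 (y - z))%:E in
  let D := fun th : 'cV[R]_n => (- fenchel f (- th) - fenchel g (X^T *m th))%E in
  (forall th, (D th <= D thetahat)%E) ->
  let uGM := fun (th : 'cV[R]_n) (bt : 'cV[R]_d) =>
    if (- fenchel f (- th) <= P bt)%E then (- fenchel f (- th))%E else -oo%E in
  let l := fun th tht : 'cV[R]_n => ((2^-1 * sqnorm2 (th - tht))%:E + D tht)%E in
  forall (bt : 'cV[R]_d) (tht : 'cV[R]_n), edom D tht ->
    (forall th, (D th <= uGM th bt)%E) /\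
    [set th | (l th tht <= uGM th bt)%E] thetahat /\
    [set th | (l th tht <= uGM th bt)%E] =
    [set th | (- fenchel f (- th) <= P bt)%E /\ dotv (tht - th) (y - th) <= 0].
Proof.
move=> P f D D_max uGM l bt tht tht_dom.
have [g_neqNy _] := g_proper.
have fE th : (- fenchel f (- th))%E = (dual_quad y th)%:E := fenchel_half_sqdistN y th.
have DE : D = dual X y g by apply/funext => th; rewrite /D fE.
have D_le_uGM th : (D th <= uGM th bt)%E.
  by rewrite /uGM fE DE; exact: dual_le_uGM.
have Dtht : D tht = (dual_quad y tht)%:E.
  by rewrite DE dual_feasibleE // (fin_dual_feasible X y g g_neqNy g_hom) -?DE.
split=> //; split.
  apply: le_trans (D_le_uGM thetahat).
  by rewrite /l DE; apply: half_sqdist_add_dual_le_max; rewrite -?DE.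
apply/seteqP; split=> th; rewrite /= /l /uGM fE Dtht -EFinD.
- by case: ifP => [_ | _ /eqP]; rewrite ?lee_fin ?half_sqdist_add_dual_quad_le.
- by case=> ->; rewrite lee_fin half_sqdist_add_dual_quad_le.
Qed.
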